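(* For any Horn-implication $\iota$ with a non-rooted tree-profile, there is a Horn-implication $\iota'$ with a rooted tree-profile (using a diamond operator not occurring in $\iota$) such that the spi-logic $\mathsf{SPi}+\{\iota,\iota'\}$ is not complete.
   Context: Fix a signature (set of relation symbols $R$ with associated diamonds $\Diamond_R$). Sp-formulas: built from propositional variables and $\top$ with $\wedge$ and the $\Diamond_R$; sp-implications $\sigma\to\tau$. A SLO is an algebra $(A,\wedge,\top,\Diamond_R)_R$ with $(A,\wedge,\top)$ a meet-semilattice with top and each $\Diamond_R$ monotone; it validates $\sigma\to\tau$ if $\sigma[\mathfrak a]\le\tau[\mathfrak a]$ for all valuations. Frames $(W,R^{\mathfrak F})_R$ with standard Kripke semantics. $\Sigma\models_{\mathsf{Kr}}\iota$ (resp. $\models_{\mathsf{SLO}}$): valid in all frames (resp. SLOs) validating $\Sigma$. $\mathsf{SPi}+\Sigma$ is complete if these coincide for all sp-implications. A profile $\pi=(\mathfrak G,S,u,v)$: $\mathfrak G=(\Delta,R^{\mathfrak G})_R$ a finite rooted frame, $u,v\in\Delta$, $S$ a relation symbol with $(u,v)\notin S^{\mathfrak G}$; $\Phi_\pi=\forall\bar x\big(\bigwedge_{(x_i,x_j)\in R^{\mathfrak G}}R(x_i,x_j)\to S(u,v)\big)$. An sp-implication is a Horn-implication with profile $\pi$ if it is valid in exactly the frames satisfying $\Phi_\pi$. $\pi$ is a tree-profile if $(\Delta,\bigcup_RR^{\mathfrak G})$ is a finite directed tree and the $R^{\mathfrak G}$ are pairwise disjoint; a tree-profile is rooted if $u$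 is the root, non-rooted otherwise. *)

From Stdlib Require Import Relations.
From mathcomp Require Import ssreflect ssrbool eqtype fintype.

Set Implicit Arguments.
Unset Printing Implicit Defensive.
Unset Strict Implicit.

Section Defs.
Variable Rel : Type.

Inductive spform : Type :=
| spVar : nat -> spform
| spTop : spform
| spAnd : spform -> spform -> spform
| spDia : Rel -> spform -> spform.

Record spimpl : Type := SpImpl { ant : spform ; cons : spform }.

Fixpoint occurs_form (R : Rel) (f : spform) : Prop :=
  match f with
  | spVar _ => False
  | spTop => False
  | spAnd f g => occurs_form R f \/ occurs_form R g
  | spDia R' f => R' = R \/ occurs_form R f
  end.

Definition occurs (R : Rel) (i : spimpl) : Prop :=
  occurs_form R (ant i) \/ occurs_form R (cons i).

Record frame : Type := Frame { W : Type ; frel : Rel -> W -> W -> Prop }.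

Fixpoint ksat (F : frame) (V : nat -> W F -> Prop) (f : spform) (w : W F) : Prop :=
  match f with
  | spVar n => V n w
  | spTop => True
  | spAnd f g => ksat V f w /\ ksat V g w
  | spDia R f => exists w', @frel F R w w' /\ ksat V f w'
  end.

Definition frame_valid (F : frame) (i : spimpl) : Prop :=
  forall (V : nat -> W F -> Prop) (w : W F), ksat V (ant i) w -> ksat V (cons i) w.

Record SLO : Type := MkSLO {
  car : Type ;
  meet : car -> car -> car ;
  top : car ;
  dia : Rel -> car -> car ;
  meetA : forall a b c, meet a (meet b c) = meet (meet a b) c ;
  meetC : forall a b, meet a b = meet b a ;
  meetI : forall a, meet a a = a ;
  meet_top : forall a, meet a top = a ;
  dia_mono : forall R a b, meet a b = a -> meet (dia R a) (dia R b) = dia R a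
}.

Definition sle (A : SLO) (a b : car A) : Prop := meet a b = a.

Fixpoint seval (A : SLO) (v : nat -> car A) (f : spform) : car A :=
  match f with
  | spVar n => v n
  | spTop => top A
  | spAnd f g => meet (seval v f) (seval v g)
  | spDia R f => @dia A R (seval v f)
  end.

Definition slo_valid (A : SLO) (i : spimpl) : Prop :=
  forall v : nat -> car A, sle (seval v (ant i)) (seval v (cons i)).

Definition kr_entails (Sigma : spimpl -> Prop) (i : spimpl) : Prop :=
  forall F : frame, (forall j, Sigma j -> frame_valid F j) -> frame_valid F i.

Definition slo_entails (Sigma : spimpl -> Prop) (i : spimpl) : Prop :=
  forall A : SLO, (forall j, Sigma j -> slo_valid A j) -> slo_valid A i.

Definition complete (Sigma : spimpl -> Prop) : Prop :=
  forall i, kr_entails Sigma i <-> slo_entails Sigma i.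

Definition edge (D : Type) (RG : Rel -> D -> D -> Prop) (x y : D) : Prop :=
  exists R, RG R x y.

Definition is_root (D : Type) (RG : Rel -> D -> D -> Prop) (r : D) : Prop :=
  forall x, clos_refl_trans D (edge RG) r x.

Record profile : Type := Profile {
  pD : finType ;
  pR : Rel -> pD -> pD -> Prop ;
  pS : Rel ;
  pu : pD ;
  pv : pD ;
  p_rooted : exists r, is_root pR r ;
  p_notS : ~ pR pS pu pv
}.

Definition sat_Phi (F : frame) (p : profile) : Prop :=
  forall g : pD p -> W F,
    (forall R x y, @pR p R x y -> @frel F R (g x) (g y)) ->
    @frel F (pS p) (g (pu p)) (g (pv p)).

Definition horn_with_profile (i : spimpl) (p : profile) : Prop :=
  forall F : frame, frame_valid F i <-> sat_Phi F p.

Definition directed_tree_with_root (D : Type) (RG : Rel -> D -> D -> Prop) (r : D) : Prop :=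
  is_root RG r /\
  (forall y, ~ edge RG y r) /\
  (forall x, x <> r -> exists y, edge RG y x) /\
  (forall x y1 y2, edge RG y1 x -> edge RG y2 x -> y1 = y2).

Definition pairwise_disjoint (D : Type) (RG : Rel -> D -> D -> Prop) : Prop :=
  forall R R' x y, R <> R' -> RG R x y -> RG R' x y -> False.

Definition tree_profile (p : profile) : Prop :=
  (exists r, directed_tree_with_root (@pR p) r) /\ pairwise_disjoint (@pR p).

Definition rooted_tree_profile (p : profile) : Prop :=
  tree_profile p /\ directed_tree_with_root (@pR p) (pu p).

Definition nonrooted_tree_profile (p : profile) : Prop :=
  tree_profile p /\ ~ directed_tree_with_root (@pR p) (pu p).

End Defs.

From Pilot Require Import Defs.
From Stdlib Require Import Relations ClassicalEpsilon FunctionalExtensionality PropExtensionality ProofIrrelevance Classical.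
From mathcomp Require Import ssreflect ssrbool ssrfun eqtype ssrnat seq choice fintype bigop.
From mathcomp Require Import zify.

Set Implicit Arguments.
Unset Strict Implicit.
Unset Printing Implicit Defensive.

(* Let [y] be the parent of [u] in the tree of [pi], [L] the label of [y -> u],
   and [Q] a relation symbol occurring neither in [iota] nor in [pi]; then
   [iota' := <>Q p -> <>L p] has the two-node rooted profile expressing
   [Q <= L].  Let [sigma] describe the tree of [pi], with [y -> u] relabelled
   [Q], by nested diamonds, and let [tau] add [<>S p_v] at [u].  In a frame
   validating [iota] and [iota'], a point satisfying [sigma] unravels into a
   homomorphic image of the relabelled tree, which is one of the tree of [pi]
   because [Q <= L]; so [Phi_pi] provides the [S]-edge that [tau] asks for.
   Now keep the part of the tree below [u] and add a point [*] that is an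
   [R]-loop for every [R <> Q] and has a single [Q]-edge, into [u].  As [u] is
   not the root, this frame still satisfies [Phi_pi], so the SLO of the sets
   that contain [*] as soon as they contain a node validates [iota]; it
   validates [iota'] because [<>Q X] can only hold at [*]; but at [*] [sigma]
   holds and [tau] fails. *)

Section DirectedTree.
Variables (Rel : Type) (D : finType) (RG : Rel -> D -> D -> Prop) (r : D).
Hypothesis tree : directed_tree_with_root RG r.

Local Notation reach := (clos_refl_trans D (edge RG)).

Lemma tree_ind (P : D -> Prop) :
  P r -> (forall a b, edge RG a b -> P a -> P b) -> forall x, P x.
Proof.
move=> Pr Pstep x; case: tree => root _.
by elim: (clos_rt_rtn1 _ _ _ _ (root x)) => // y z yz _; apply: Pstep.
Qed.

Lemma tree_parent x : x <> r -> exists y, edge RG y x.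
Proof. by case: tree => _ [_ [+ _]]; apply. Qed.

Lemma tree_parent_uniq x y1 y2 : edge RG y1 x -> edge RG y2 x -> y1 = y2.
Proof. by case: tree => _ [_ [_]]; apply. Qed.

Lemma tree_root_no_parent x : ~ edge RG x r.
Proof. by case: tree => _ [+ _]; apply. Qed.

Lemma tree_root_child x : x <> r -> exists c, edge RG r c.
Proof.
move=> xr; case: tree => root _.
by case: (clos_rt_rt1n _ _ _ _ (root x)) xr => // c z rc _ _; exists c.
Qed.

Lemma reach_root x : reach x r -> x = r.
Proof.
move=> xr; have {}xr := clos_rt_rtn1 _ _ _ _ xr.
inversion xr as [|y z yr]; first by [].
by case: (tree_root_no_parent yr).
Qed.

Lemma reach_edge_inv u a b : edge RG a b -> reach u b -> b = u \/ reach u a.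
Proof.
move=> ab ub; have {}ub := clos_rt_rtn1 _ _ _ _ ub.
destruct ub as [|p b pb up]; first by left.
by right; rewrite (tree_parent_uniq ab pb); apply: clos_rtn1_rt.
Qed.

Inductive at_depth : nat -> D -> Prop :=
| at_depth_root : at_depth 0 r
| at_depth_edge n a b : at_depth n a -> edge RG a b -> at_depth n.+1 b.

Lemma at_depth_ex x : exists n, at_depth n x.
Proof.
elim/tree_ind: x => [|a b ab [n an]]; first by exists 0; constructor.
by exists n.+1; apply: at_depth_edge an ab.
Qed.

Lemma at_depth_uniq n m x : at_depth n x -> at_depth m x -> n = m.
Proof.
move=> nx; elim: nx m => [|k a b _ IH ab] m mx.
  by inversion mx as [|k' a' b' _ a'r]; last case: (tree_root_no_parent a'r).
inversion mx as [|k' a' b' a'k' a'b]; first by subst; case: (tree_root_no_parent ab).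
by rewrite (tree_parent_uniq a'b ab) in a'k'; rewrite (IH _ a'k').
Qed.

Definition depth x : nat :=
  proj1_sig (constructive_indefinite_description _ (at_depth_ex x)).

Lemma depthP x : at_depth (depth x) x.
Proof. by rewrite /depth; case: constructive_indefinite_description. Qed.

Lemma depth_root : depth r = 0.
Proof. by apply: at_depth_uniq (depthP r) _; constructor. Qed.

Lemma depth_edge a b : edge RG a b -> depth b = (depth a).+1.
Proof. by move=> ab; apply: at_depth_uniq (depthP b) (at_depth_edge (depthP a) ab). Qed.

Lemma depth_eq0 x : depth x = 0 -> x = r.
Proof. by move=> dx; have := depthP x; rewrite dx => x0; inversion x0. Qed.

Lemma depth_reach a b : reach a b -> depth a <= depth b.
Proof.
move=> ab; have {ab} := clos_rt_rtn1 _ _ _ _ ab.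
elim=> // y z yz _ IH; rewrite (depth_edge yz); lia.
Qed.

Definition height : nat := \max_x depth x.

Lemma depth_le_height x : depth x <= height.
Proof. exact: leq_bigmax. Qed.

(* [h] shifts every depth by [depth (h r)], which a deepest node forces to be [0]. *)
Lemma tree_hom_root h : (forall R a b, RG R a b -> RG R (h a) (h b)) -> h r = r.
Proof.
move=> hom.
have depth_h x : depth (h x) = depth x + depth (h r).
  elim/tree_ind: x => [|a b [R ab] IH]; first by rewrite depth_root.
  rewrite (depth_edge (ex_intro _ R ab)) (depth_edge (ex_intro _ R (hom _ _ _ ab))) IH.
  by rewrite addSn.
have [x height_x] : {x | height = depth x} by apply: eq_bigmax; apply/card_gt0P; exists r.
apply: depth_eq0; have := depth_le_height (h x).
rewrite depth_h height_x; lia.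
Qed.

Section Lift.
Variables (T : Type) (rel : D -> D -> T -> T -> Prop) (Z : D -> T -> Prop) (t : T).
Hypotheses (Zr : Z r t)
  (Zstep : forall a b s, edge RG a b -> Z a s -> exists s', rel a b s s' /\ Z b s').

Let parent x := epsilon (inhabits r) (fun p => edge RG p x).

Let parentP x : x <> r -> edge RG (parent x) x.
Proof. by move=> xr; apply: (epsilon_spec (inhabits r) (fun p => edge RG p x)); apply: tree_parent. Qed.

Fixpoint lift_at k x : T :=
  if k is k'.+1 then
    epsilon (inhabits t) (fun s => rel (parent x) x (lift_at k' (parent x)) s /\ Z x s)
  else t.

Let lift_atP k x : depth x = k -> Z x (lift_at k x) /\
  (0 < k -> rel (parent x) x (lift_at k.-1 (parent x)) (lift_at k x)).
Proof.
elim: k x => [|k IH] x dx.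
  by rewrite (depth_eq0 dx).
have xr : x <> r by move=> xr; move: dx; rewrite xr depth_root.
have px := parentP xr.
have dp : depth (parent x) = k by move: dx; rewrite (depth_edge px) => -[].
have [Zp _] := IH _ dp.
by have [] := epsilon_spec (inhabits t) _ (Zstep px Zp).
Qed.

Lemma tree_lift : exists g, g r = t /\
  (forall a b, edge RG a b -> rel a b (g a) (g b)) /\ (forall x, Z x (g x)).
Proof.
exists (fun x => lift_at (depth x) x); split; first by rewrite depth_root.
split=> [a b ab|x]; last by case: (lift_atP (erefl (depth x))).
have br : b <> r by move=> br; apply: (tree_root_no_parent (x := a)); rewrite -br.
have [_ /(_ isT)] := lift_atP (depth_edge ab).
by rewrite (depth_edge ab) (tree_parent_uniq (parentP br) ab).
Qed.

End Lift.

End DirectedTree.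

Definition bigAnd (Rel : Type) (l : seq (spform Rel)) : spform Rel :=
  foldr (@spAnd Rel) (@spTop Rel) l.

Lemma ksat_bigAnd_map (Rel : Type) (T : eqType) (F : frame Rel) (V : nat -> W F -> Prop)
    (phi : T -> spform Rel) (s : seq T) w :
  ksat V (bigAnd (map phi s)) w <-> forall c, c \in s -> ksat V (phi c) w.
Proof.
elim: s => [|a s IH] /=; first by split.
rewrite IH; split=> [[phi_a phi_s] c|phi_as].
  by rewrite inE => /predU1P [->|]; [apply: phi_a | apply: phi_s].
by split=> [|c cs]; apply: phi_as; rewrite inE ?eqxx ?cs ?orbT.
Qed.

Section TreeFormula.
Variables (Rel : Type) (D : finType) (RG : Rel -> D -> D -> Prop) (r : D).
Hypothesis tree : directed_tree_with_root RG r.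
Variables (lab : D -> D -> Rel) (deco : D -> spform Rel).

Definition children x : seq D :=
  [seq c <- enum D | if excluded_middle_informative (edge RG x c) then true else false].

Lemma mem_children x c : c \in children x <-> edge RG x c.
Proof.
by rewrite mem_filter mem_enum andbT; case: excluded_middle_informative.
Qed.

(* The variable [pickle y] names the node [y]; [n] bounds the depth described. *)
Fixpoint tform n x : spform Rel :=
  spAnd (spAnd (spVar Rel (pickle x)) (deco x))
    (if n is n'.+1 then bigAnd [seq spDia (lab x c) (tform n' c) | c <- children x]
     else spTop Rel).

Definition tree_form : spform Rel := tform (height tree) r.

Section Semantics.
Variables (F : frame Rel) (V : nat -> W F -> Prop).

Definition labelled_hom (g : D -> W F) : Prop :=
  forall a b, edge RG a b -> Defs.frel (lab a b) (g a) (g b).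

Definition decorated (g : D -> W F) : Prop :=
  (forall x, V (pickle x) (g x)) /\ (forall x, ksat V (deco x) (g x)).

Lemma ksat_tform g : labelled_hom g -> decorated g -> forall n x, ksat V (tform n x) (g x).
Proof.
move=> hom [var dec]; elim=> [|n IH] x /=; split=> //.
apply/ksat_bigAnd_map => c /mem_children xc.
by exists (g c); split; [apply: hom | apply: IH].
Qed.

Lemma ksat_tree_form g : labelled_hom g -> decorated g -> ksat V tree_form (g r).
Proof. by move=> hom dec; apply: ksat_tform. Qed.

Lemma tree_form_hom w : ksat V tree_form w ->
  exists g, g r = w /\ labelled_hom g /\ decorated g.
Proof.
pose Z x := ksat V (tform (height tree - depth tree x) x).
have Zbase x s : Z x s -> V (pickle x) s /\ ksat V (deco x) s.
  by rewrite /Z; case: (_ - _) => [|n] [[]].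
move=> tree_w; have Zr : Z r w by rewrite /Z depth_root subn0.
have [|g [gr [hom Zg]]] := tree_lift tree (rel := fun a b => Defs.frel (lab a b)) Zr.
  move=> a b s ab; rewrite /Z.
  have -> : height tree - depth tree a = (height tree - depth tree b).+1.
    by have := depth_le_height tree b; rewrite (depth_edge tree ab); lia.
  move=> [_ /ksat_bigAnd_map /(_ b)].
  by apply; apply/mem_children.
by exists g; do 2!split=> //; split=> x; have [] := Zbase x _ (Zg x).
Qed.

End Semantics.
End TreeFormula.

Section SubComplexAlgebra.
Variables (Rel : Type) (F : frame Rel) (P : (W F -> Prop) -> Prop).
Hypotheses (P_meet : forall X Y, P X -> P Y -> P (fun w => X w /\ Y w))
  (P_top : P (fun _ => True))
  (P_dia : forall R X, P X -> P (fun w => exists w', Defs.frel R w w' /\ X w')).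

Lemma sub_ext (X Y : {X | P X}) : (forall w, sval X w <-> sval Y w) -> X = Y.
Proof.
case: X Y => [X PX] [Y PY] /= XY.
have E : X = Y by apply: functional_extensionality => w; apply: propositional_extensionality.
by subst; rewrite (proof_irrelevance _ PX PY).
Qed.

Definition sub_meet (X Y : {X | P X}) : {X | P X} := exist P _ (P_meet (svalP X) (svalP Y)).
Definition sub_top : {X | P X} := exist P _ P_top.
Definition sub_dia R (X : {X | P X}) : {X | P X} := exist P _ (P_dia R (svalP X)).

Lemma sub_meetA X Y Z : sub_meet X (sub_meet Y Z) = sub_meet (sub_meet X Y) Z.
Proof. by apply: sub_ext => w /=; tauto. Qed.

Lemma sub_meetC X Y : sub_meet X Y = sub_meet Y X.
Proof. by apply: sub_ext => w /=; tauto. Qed.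

Lemma sub_meetI X : sub_meet X X = X.
Proof. by apply: sub_ext => w /=; tauto. Qed.

Lemma sub_meet_top X : sub_meet X sub_top = X.
Proof. by apply: sub_ext => w /=; tauto. Qed.

Lemma sub_dia_mono R X Y : sub_meet X Y = X -> sub_meet (sub_dia R X) (sub_dia R Y) = sub_dia R X.
Proof.
move=> XY; apply: sub_ext => w /=; split=> [[]//|[w' [ww' Xw']]].
by split; exists w'; split=> //; move: Xw'; rewrite -XY => -[].
Qed.

Definition subcomplex : SLO Rel :=
  MkSLO sub_meetA sub_meetC sub_meetI sub_meet_top sub_dia_mono.

Lemma sval_seval (v : nat -> car subcomplex) f w :
  sval (seval v f) w <-> ksat (fun n => sval (v n)) f w.
Proof.
elim: f w => [n||f IHf g IHg|R f IH] w //=; first by rewrite IHf IHg.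
by split=> -[w' [ww' fw']]; exists w'; split=> //; apply/IH.
Qed.

Lemma sle_subcomplex (X Y : car subcomplex) : sle X Y <-> forall w, sval X w -> sval Y w.
Proof.
split=> [<- w /= []//|XY]; apply: sub_ext => w /=.
by split=> [[]//|Xw]; split=> //; apply: XY.
Qed.

Lemma subcomplex_valid i : frame_valid F i -> slo_valid subcomplex i.
Proof. by move=> valid v; apply/sle_subcomplex => w; rewrite !sval_seval; apply: valid. Qed.

End SubComplexAlgebra.

Section Inclusion.
Variables (Rel : Type) (Q L : Rel).

Definition incl_impl : spimpl Rel := SpImpl (spDia Q (spVar Rel 0)) (spDia L (spVar Rel 0)).

Lemma frame_valid_incl F :
  frame_valid F incl_impl <-> forall a b : W F, Defs.frel Q a b -> Defs.frel L a b.
Proof.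
split=> [valid a b ab | QL V w [w' [ww' Vw']]]; last by exists w'; split=> //; apply: QL.
by have [|b' [ab' <-]] := valid (fun _ x => x = b) a; first by exists b.
Qed.

Definition incl_rel R (a b : bool) : Prop := R = Q /\ a = false /\ b = true.

Lemma incl_tree : directed_tree_with_root incl_rel false.
Proof.
do ![split]; first by case; [apply: rt_step; exists Q | apply: rt_refl].
- by move=> y [R [_ []]].
- by case=> // _; exists false, Q.
- by move=> x y1 y2 [R1 [_ [-> _]]] [R2 [_ [-> _]]].
Qed.

Hypothesis LQ : L <> Q.

Definition incl_profile : profile Rel :=
  @Profile Rel _ incl_rel L false true (ex_intro _ false (proj1 incl_tree)) (fun '(conj E _) => LQ E).

Lemma incl_profile_rooted : rooted_tree_profile incl_profile.
Proof.
split; last exact: incl_tree.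
split=> [|R R' x y RR' [RQ _] [R'Q _]]; first by exists false; apply: incl_tree.
by apply: RR'; rewrite RQ R'Q.
Qed.

Lemma incl_impl_horn : horn_with_profile incl_impl incl_profile.
Proof.
move=> F; rewrite frame_valid_incl; split=> [QL g hom | Phi a b ab].
  by apply: QL; apply: hom.
by apply: (Phi (fun x => if x then b else a)) => R x y [-> [-> ->]].
Qed.

End Inclusion.

Section GluedFrame.
Variables (Rel : Type) (D : finType) (RG : Rel -> D -> D -> Prop) (u : D) (Q : Rel).
Hypothesis noQ : forall a b, ~ RG Q a b.

Definition glued_rel R (h1 h2 : option D) : Prop :=
  match h1, h2 with
  | None, None => R <> Q
  | None, Some b => R = Q /\ b = u
  | Some _, None => False
  | Some a, Some b => RG R a b /\ clos_refl_trans D (edge RG) u a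
  end.

Definition glued_frame : frame Rel := @Frame Rel (option D) glued_rel.

Definition admissible (X : option D -> Prop) : Prop := (exists a, X (Some a)) -> X None.

Lemma admissible_meet X Y : admissible X -> admissible Y -> admissible (fun h => X h /\ Y h).
Proof. by move=> aX aY [a [Xa Ya]]; split; [apply: aX | apply: aY]; exists a. Qed.

Lemma admissible_top : admissible (fun _ => True).
Proof. by []. Qed.

Lemma admissible_dia R X : admissible X ->
  admissible (fun h => exists h', Defs.frel (f:=glued_frame) R h h' /\ X h').
Proof.
move=> aX [a [[b|] [/= ab Xb]]] //; case: ab => ab _.
by exists None; split; [move=> RQ; move: ab; rewrite RQ => /noQ | apply: aX; exists b].
Qed.

Definition glued_slo : SLO Rel :=
  subcomplex (F := glued_frame) admissible_meet admissible_top admissible_dia.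

(* [Q] is not included in [L] in [glued_frame], but its only [Q]-edge leaves
   [None], which lies in every admissible set that meets [Some _]. *)
Lemma glued_slo_incl L : L <> Q -> slo_valid glued_slo (incl_impl Q L).
Proof.
move=> LQ v; apply/sle_subcomplex => h; rewrite !sval_seval /=.
case: h => [a|] [[b|] [hh' vh']] //=; first by case: hh' => /noQ.
by exists None; split=> //; apply: (svalP (v 0)); exists b.
Qed.

End GluedFrame.

Section Avoided.
Variables (T : Type) (f : nat -> T).

Definition avoided (P : T -> Prop) : Prop := exists N, forall n, N <= n -> ~ P (f n).

Lemma avoided_sub (P P' : T -> Prop) : (forall t, P' t -> P t) -> avoided P -> avoided P'.
Proof. by move=> P'P [N HN]; exists N => n /HN nP /P'P. Qed.

Lemma avoidedU (P P' : T -> Prop) : avoided P -> avoided P' -> avoided (fun t => P t \/ P' t).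
Proof.
move=> [N HN] [N' HN']; exists (maxn N N') => n.
by rewrite geq_max => /andP [/HN nP /HN' nP'] [].
Qed.

Lemma avoided_eq t : injective f -> avoided (fun t' => t' = t).
Proof.
move=> f_inj; case: (classic (exists m, f m = t)) => [[m <-]|not_img].
  by exists m.+1 => n mn /f_inj nm; move: mn; rewrite nm ltnn.
by exists 0 => n _ fn; apply: not_img; exists n.
Qed.

Lemma avoided_exists (X : finType) (P : X -> T -> Prop) :
  (forall x, avoided (P x)) -> avoided (fun t => exists x, P x t).
Proof.
move=> avP; suff /(_ (enum X)) : forall s : seq X, avoided (fun t => exists2 x, x \in s & P x t).
  by apply: avoided_sub => t [x Pxt]; exists x; rewrite ?mem_enum.
elim=> [|x s IH]; first by exists 0 => n _ [].
apply: avoided_sub (avoidedU (avP x) IH) => t [y].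
by rewrite inE => /predU1P [-> | ys] Pyt; [left | right; exists y].
Qed.

End Avoided.

Lemma avoided_occurs_form (Rel : Type) (f : nat -> Rel) (phi : spform Rel) :
  injective f -> avoided f (fun R => occurs_form R phi).
Proof.
move=> f_inj; elim: phi => [n||phi IHphi psi IHpsi|R phi IH] /=.
- by exists 0 => ? _ [].
- by exists 0 => ? _ [].
- exact: avoidedU.
- by apply: avoided_sub (avoidedU (avoided_eq R f_inj) IH) => R' [<-|]; [left | right].
Qed.

Definition edge_label (Rel : Type) (p : profile Rel) (a b : pD p) : Rel :=
  epsilon (inhabits (pS p)) (fun R => pR R a b).

Lemma edge_label_spec (Rel : Type) (p : profile Rel) R (a b : pD p) :
  pairwise_disjoint (@pR _ p) -> pR R a b -> edge_label a b = R.
Proof.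
move=> disj ab.
have lab : pR (edge_label a b) a b.
  by apply: (epsilon_spec _ (fun R => pR R a b)); exists R.
by apply: NNPP => neq; apply: disj neq lab ab.
Qed.

Lemma exists_fresh_rel (Rel : Type) (f : nat -> Rel) (i : spimpl Rel) (p : profile Rel) :
  injective f -> pairwise_disjoint (@pR _ p) ->
  exists Q, ~ occurs Q i /\ pS p <> Q /\ forall a b, ~ @pR _ p Q a b.
Proof.
move=> f_inj disj.
have avoided_labels : avoided f (fun R => exists a b : pD p, pR R a b).
  apply: (@avoided_sub _ _ (fun R => exists a b, R = @edge_label _ p a b)).
    by move=> R [a [b ab]]; exists a, b; rewrite (edge_label_spec disj ab).
  by do 2!apply: avoided_exists => ?; apply: avoided_eq.
have [N fresh] : avoided f (fun R => occurs R i \/ R = pS p \/ exists a b : pD p, pR R a b).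
  apply: avoidedU; last by apply: avoidedU => //; apply: avoided_eq.
  by apply: avoidedU; apply: avoided_occurs_form.
exists (f N); split; [|split] => [iN|SN|a b abN]; apply: (fresh N (leqnn N)).
- by left.
- by right; left.
- by right; right; exists a, b.
Qed.

Section Counterexample.
Variables (Rel : Type) (p : profile Rel) (r : pD p).
Hypotheses (tree : directed_tree_with_root (@pR _ p) r)
  (disj : pairwise_disjoint (@pR _ p)).
Variables (y0 : pD p) (L Q : Rel).
Hypotheses (y0u : pR L y0 (pu p)) (noQ : forall a b : pD p, ~ pR Q a b) (SQ : pS p <> Q).

Local Notation reach := (clos_refl_trans _ (edge (@pR _ p))).

Definition relabelled (a b : pD p) : Rel :=
  if (a == y0) && (b == pu p) then Q else edge_label a b.

Definition S_deco (x : pD p) : spform Rel :=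
  if x == pu p then spDia (pS p) (spVar Rel (pickle (pv p))) else spTop Rel.

Definition cex_impl : spimpl Rel :=
  SpImpl (tree_form tree relabelled (fun _ => spTop Rel)) (tree_form tree relabelled S_deco).

Lemma edge_y0u : edge (@pR _ p) y0 (pu p).
Proof. by exists L. Qed.

Lemma u_not_root : pu p <> r.
Proof. by move=> ur; apply: (tree_root_no_parent tree (x := y0)); rewrite -ur; apply: edge_y0u. Qed.

Lemma not_reach_u_y0 : ~ reach (pu p) y0.
Proof. by move=> /(depth_reach tree); rewrite (depth_edge tree edge_y0u) ltnn. Qed.

Lemma cex_frame_valid F : sat_Phi F p ->
  (forall a b : W F, Defs.frel Q a b -> Defs.frel L a b) -> frame_valid F cex_impl.
Proof.
move=> Phi QL V w /tree_form_hom [g [<- [hom [var _]]]].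
have g_hom R a b : pR R a b -> Defs.frel R (g a) (g b).
  move=> ab; have := hom a b (ex_intro _ R ab); rewrite /relabelled.
  case: ifP => [/andP [/eqP ea /eqP eb] | _]; last by rewrite (edge_label_spec disj ab).
  subst; have -> : R = L by apply: NNPP => RL; apply: disj RL ab y0u.
  exact: QL.
apply: ksat_tree_form => //; split=> // x; rewrite /S_deco.
by case: eqP => [-> | _] //=; exists (g (pv p)); split; [apply: Phi | apply: var].
Qed.

Local Notation glued := (glued_frame (@pR _ p) (pu p) Q).

Lemma glued_sat_Phi : sat_Phi glued p.
Proof.
move=> g hom /=.
case gr: (g r) => [a|].
- have g_some x : exists c, g x = Some c.
    elim/(tree_ind tree): x => [|x y [R xy] [c gx]]; first by exists a.
    by move: (hom _ _ _ xy); rewrite gx; case: (g y) => [d|] //; exists d.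
  pose h x := odflt r (g x).
  have h_hom R x y : pR R x y -> pR R (h x) (h y).
    move=> xy; move: (hom _ _ _ xy); rewrite /h.
    by have [cx ->] := g_some x; have [cy ->] := g_some y; case.
  have ar : a = r by have := tree_hom_root tree h_hom; rewrite /h gr.
  have [c [R rc]] := tree_root_child tree u_not_root.
  move: (hom _ _ _ rc); rewrite gr ar; case: (g c) => [d|] //= [_ ur].
  by case: u_not_root; apply: (reach_root tree).
- have g_none x : g x = None.
    elim/(tree_ind tree): x => // x y [R xy] gx.
    move: (hom _ _ _ xy); rewrite gx; case: (g y) => [d|] //= [RQ _].
    by rewrite RQ in xy; case: (noQ xy).
  by rewrite !g_none.
Qed.

Definition embed (x : pD p) : option (pD p) :=
  if excluded_middle_informative (reach (pu p) x) then Some x else None.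

Lemma embed_reach x : reach (pu p) x -> embed x = Some x.
Proof. by rewrite /embed; case: excluded_middle_informative. Qed.

Lemma embed_unreach x : ~ reach (pu p) x -> embed x = None.
Proof. by rewrite /embed; case: excluded_middle_informative. Qed.

Lemma embed_hom : labelled_hom (F := glued) (@pR _ p) relabelled embed.
Proof.
move=> a b [R ab]; rewrite /relabelled.
case: ifP => [/andP [/eqP -> /eqP ->] | not_y0u].
  by rewrite embed_unreach ?embed_reach //; [apply: rt_refl | apply: not_reach_u_y0].
rewrite (edge_label_spec disj ab).
case: (classic (reach (pu p) a)) => ua.
  have ub : reach (pu p) b by apply: rt_trans ua (rt_step _ _ _ _ (ex_intro _ R ab)).
  by rewrite !embed_reach.
have ub : ~ reach (pu p) b.
  case/(reach_edge_inv tree (ex_intro _ R ab)) => // bu; move: not_y0u.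
  have y0b : edge (@pR _ p) y0 b by rewrite bu; apply: edge_y0u.
  by rewrite (tree_parent_uniq tree (ex_intro _ R ab) y0b) bu !eqxx.
rewrite !embed_unreach //= => RQ.
by rewrite RQ in ab; case: (noQ ab).
Qed.

(* Every variable holds at [None], so [embed] witnesses [sigma] there; [tau]
   would need a [Q]-step from [None], necessarily to [Some u], followed by an
   [S]-step to the copy of [v]. *)
Definition embed_val (m : nat) : car (glued_slo (pu p) noQ) :=
  exist (@admissible _) (fun h => h = None \/ exists x, pickle x = m /\ h = embed x)
    (fun _ => or_introl erefl).

Lemma embed_val_pickle x h : sval (embed_val (pickle x)) h -> h = None \/ h = embed x.
Proof. by case=> [|[y [/(pcan_inj pickleK_inv) -> ->]]]; [left | right]. Qed.

Lemma glued_not_valid : ~ slo_valid (glued_slo (pu p) noQ) cex_impl.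
Proof.
move=> /(_ embed_val) /sle_subcomplex /(_ None); rewrite !sval_seval.
have embed_r : embed r = None.
  by apply: embed_unreach => /(reach_root tree); apply: u_not_root.
have sigma_None : ksat (F := glued) (fun n => sval (embed_val n)) (ant cex_impl) None.
  rewrite -embed_r; apply: ksat_tree_form; first exact: embed_hom.
  by split=> // x; right; exists x.
move=> /(_ sigma_None) /tree_form_hom [g [_ [hom [var deco]]]].
have gy0 : g y0 = None.
  by case: (embed_val_pickle (var y0)) => // ->; apply/embed_unreach/not_reach_u_y0.
have gu : g (pu p) = Some (pu p).
  move: (hom _ _ edge_y0u); rewrite /relabelled !eqxx gy0 /=.
  by case: (g (pu p)) => [c|] //= [_ ->].
move: (deco (pu p)); rewrite /S_deco eqxx gu /= => -[[c|] [//= [uc _]]].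
case/embed_val_pickle => //; rewrite /embed; case: excluded_middle_informative => // _ [cv].
by apply: (@p_notS _ p); rewrite -cv.
Qed.

End Counterexample.

Theorem theorem5p18 (Rel : Type)
  (Rel_infinite : exists f : nat -> Rel, forall m n, f m = f n -> m = n)
  (iota : spimpl Rel) (pi : profile Rel) :
  nonrooted_tree_profile pi ->
  horn_with_profile iota pi ->
  exists (iota' : spimpl Rel) (pi' : profile Rel),
    rooted_tree_profile pi' /\
    horn_with_profile iota' pi' /\
    (exists R : Rel, ~ occurs R iota /\ occurs R iota') /\
    ~ complete (fun j => j = iota \/ j = iota').
Proof.
move=> [[[r tree] disj] not_rooted] horn.
have [f f_inj] := Rel_infinite.
have ur : pu pi <> r by move=> ur; apply: not_rooted; rewrite ur.
have [y0 [L y0u]] := tree_parent tree ur.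
have [Q [Q_iota [SQ noQ]]] := exists_fresh_rel iota f_inj disj.
have LQ : L <> Q by move=> LQ; rewrite LQ in y0u; apply: noQ y0u.
exists (incl_impl Q L), (incl_profile LQ).
split; first exact: incl_profile_rooted.
split; first exact: incl_impl_horn.
split; first by exists Q; split=> //; left; left.
move=> /(_ (cex_impl tree y0 Q)) [kr_slo _].
have kr : kr_entails (fun j => j = iota \/ j = incl_impl Q L) (cex_impl tree y0 Q).
  move=> F valid; apply: (cex_frame_valid disj y0u); first by apply/horn/valid; left.
  by apply/frame_valid_incl/valid; right.
apply: (glued_not_valid (tree := tree) disj y0u (noQ := noQ)); apply: (kr_slo kr) => j [->|->].
- by apply/subcomplex_valid/(horn _); apply: (glued_sat_Phi tree y0u noQ SQ).
- exact: glued_slo_incl.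
Qed.
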